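(* Let $(\Omega,\mathcal{F},\mathbb{P})$ be a complete probability space, $E$ a Polish space, and $X=\{X_t\}_{t\geq0}$ an $E$-valued stochastic process, with each atomic proposition $a$ interpreted by a Borel set $B_a\subset E$. Let $\phi_1,\phi_2$ be MTL-formulas such that $\llbracket\phi_1\rrbracket$ and $\llbracket\phi_2\rrbracket$ belong to $\mathcal{F}\otimes\mathcal{B}([0,\infty))$, and let $I$ be an interval in $[0,\infty)$. Then $\{(\omega,t) : X(\omega),t\models\phi_1\mathcal{U}_I\phi_2\}\in\mathcal{F}\otimes\mathcal{B}([0,\infty))$.
   Context: MTL-formulas: $\phi::=a\mid\phi_1\wedge\phi_2\mid\lnot\phi\mid\phi_1\mathcal{U}_I\phi_2$, $I$ an interval in $[0,\infty)$ (any endpoint type, possibly unbounded). Semantics: $X(\omega),t\models a$ iff $X_t(\omega)\in B_a$; $\lnot,\wedge$ classical; $X(\omega),t\models\phi_1\mathcal{U}_I\phi_2$ iff there exists $s\in I$ with $X(\omega),t+s\models\phi_2$ and $X(\omega),s'\models\phi_1$ for all $s'\in[t,t+s)$. $\llbracket\phi\rrbracket:=\{(\omega,t)\in\Omega\times[0,\infty) : X(\omega),t\models\phi\}$. *)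

From HB Require Import structures.
From mathcomp Require Import all_boot all_order all_algebra.
From mathcomp Require Import all_classical all_reals all_analysis.
Set Implicit Arguments.
Unset Strict Implicit.
Unset Printing Implicit Defensive.
Import Order.TTheory GRing.Theory Num.Theory.
Local Open Scope classical_set_scope.
Local Open Scope ring_scope.

(* Polish space, given via a compatible complete metric (any Polish space
   admits one): complete, Hausdorff, separable (countable dense subset). *)
Definition polish {R : realType} (E : completePseudoMetricType R) : Prop :=
  hausdorff_space E /\ exists D : set E, countable D /\ dense D.

Definition borel_set (E : topologicalType) (B : set E) : Prop :=
  <<s (@open E) >> B.

Inductive mtl (AP : Type) (R : realType) : Type :=
| MAtom of AP
| MAnd of mtl AP R & mtl AP R
| MNot of mtl AP R
| MUntil of interval R & mtl AP R & mtl AP R.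

Arguments MAtom {AP R}.
Arguments MAnd {AP R}.
Arguments MNot {AP R}.
Arguments MUntil {AP R}.

Fixpoint mtl_wf (AP : Type) (R : realType) (phi : mtl AP R) : Prop :=
  match phi with
  | MAtom _ => True
  | MAnd p q => mtl_wf p /\ mtl_wf q
  | MNot p => mtl_wf p
  | MUntil J p q => (forall s : R, s \in J -> 0 <= s) /\ mtl_wf p /\ mtl_wf q
  end.

(* X(omega), t |= phi ; the process is indexed by R but only times >= 0
   are ever consulted when t >= 0 and the formula is well-formed. *)
Fixpoint mtl_sat (AP : Type) (R : realType) (Omega E : Type)
    (X : R -> Omega -> E) (B : AP -> set E) (phi : mtl AP R)
    (omega : Omega) (t : R) : Prop :=
  match phi with
  | MAtom a => B a (X t omega)
  | MAnd p q => mtl_sat X B p omega t /\ mtl_sat X B q omega t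
  | MNot p => ~ mtl_sat X B p omega t
  | MUntil J p q =>
      exists s : R, s \in J /\ mtl_sat X B q omega (t + s) /\
        (forall s' : R, t <= s' -> s' < t + s -> mtl_sat X B p omega s')
  end.

Definition mtl_den (AP : Type) (R : realType) (Omega E : Type)
    (X : R -> Omega -> E) (B : AP -> set E) (phi : mtl AP R)
    : set (Omega * R) :=
  [set p | 0 <= p.2 /\ mtl_sat X B phi p.1 p.2].

From HB Require Import structures.
From mathcomp Require Import all_boot all_order all_algebra.
From mathcomp Require Import all_classical all_reals all_analysis.
From mathcomp Require Import measurable_realfun.
From Stdlib Require Cantor Lia.
Set Implicit Arguments.
Unset Strict Implicit.
Unset Printing Implicit Defensive.
Import Order.TTheory GRing.Theory Num.Theory.
Local Open Scope classical_set_scope.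
Local Open Scope ring_scope.

(* Write [holds_on A1 w t c] when [A1] holds at all times of [[t, c)], and
   [run_end A1 (w, t)] for the supremum of such [c]. A witness [s] of the Until
   formula at [(w, t)] either ends exactly at [run_end], or is an endpoint of
   [I], or lies strictly between two rationals of [I] with [A1] holding a little
   beyond [t + s]. This writes the Until set as a countable union of sets which,
   after approximating real times by rationals, only involve sets
   [{w | exists u in ]q1, q2[, (w, u) \in A}]. These are measurable by the
   measurable projection theorem: over a complete probability space, the
   projection onto [Omega] of a product-measurable subset of [Omega * R] is
   measurable. It goes through Suslin schemes: every product-measurable set is
   the Suslin operation applied to rectangles [F * [a, b]] with [F] measurable
   (the sets which, together with their complements, have this form are a
   sigma-algebra containing the generators); projection commutes with the Suslin
   operation on such schemes by compactness of the intervals; and, by means of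
   measurable covers, the Suslin operation preserves measurability up to a null
   set, which completeness absorbs. *)

Section suslin_operation.
Variable X : Type.

Definition suslin (E : seq nat -> set X) : set X :=
  [set x | exists f : nat -> nat, forall n, E (mkseq f n.+1) x].

Fixpoint branch (g : seq nat -> nat) (n : nat) : seq nat :=
  if n is m.+1 then rcons (branch g m) (g (branch g m)) else [::].

Lemma branchE g n : branch g n = mkseq (fun i => g (branch g i)) n.
Proof. by elim: n => //= n IHn; rewrite mkseqS -IHn. Qed.

Lemma suslin_branch (E H : seq nat -> set X) x :
  (forall s, s != [::] -> H s `<=` E s) ->
  (forall s, H s x -> exists k, H (rcons s k) x) ->
  H [::] x -> suslin E x.
Proof.
move=> HE Hstep H0.
have /choice[g Hg] : forall s, exists k, H s x -> H (rcons s k) x.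
  move=> s; have [/Hstep[k Hk]|nHs] := pselect (H s x); first by exists k.
  by exists 0%N.
have Hbranch n : H (branch g n) x by elim: n => //= n IHn; exact: Hg.
exists (fun i => g (branch g i)) => n; rewrite -branchE.
by apply: HE (Hbranch n.+1); rewrite /= -size_eq0 size_rcons.
Qed.

Lemma mkseqSl (A : Type) (f : nat -> A) n :
  mkseq f n.+1 = f 0%N :: mkseq (fun i => f i.+1) n.
Proof. by rewrite /mkseq /= -[1%N]addn0 iotaDl -map_comp. Qed.

Definition cup_index (s : seq nat) : nat * seq nat :=
  if s is h :: t then ((Cantor.of_nat h).1, (Cantor.of_nat h).2 :: t)
  else (0%N, [::]).

Lemma bigcup_suslin (E : nat -> seq nat -> set X) :
  \bigcup_k suslin (E k) = suslin (fun s => E (cup_index s).1 (cup_index s).2).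
Proof.
apply/seteqP; split=> [x [k _ [f Ef]]|x [f Ef]].
  exists (fun i => if i is j.+1 then f j.+1 else Cantor.to_nat (k, f 0%N)) => n.
  by rewrite mkseqSl /cup_index Cantor.cancel_of_to /= -mkseqSl.
exists (Cantor.of_nat (f 0%N)).1 => //.
exists (fun i => if i is j.+1 then f j.+1 else (Cantor.of_nat (f 0%N)).2) => n.
by move: (Ef n); rewrite !mkseqSl.
Qed.

Lemma to_nat_monotone k : {homo (fun i => Cantor.to_nat (k, i)) : i j / (i <= j)%N}.
Proof.
move=> i j /ssrnat.leP ij; apply/ssrnat.leP.
have := Cantor.to_nat_spec k i; have := Cantor.to_nat_spec k j; Lia.nia.
Qed.

(* Step [n] of a branch of the new scheme is step [m] of a branch of scheme [k],
   where [(k, m)] is the [n]-th pair of the Cantor enumeration. *)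
Definition cap_index (s : seq nat) : nat * seq nat :=
  let km := Cantor.of_nat (size s).-1 in
  (km.1, mkseq (fun i => nth 0%N s (Cantor.to_nat (km.1, i))) km.2.+1).

Lemma bigcap_suslin (E : nat -> seq nat -> set X) :
  \bigcap_k suslin (E k) = suslin (fun s => E (cap_index s).1 (cap_index s).2).
Proof.
have nth_branch (f : nat -> nat) n k m : Cantor.to_nat (k, m) = n ->
    mkseq (fun i => nth 0%N (mkseq f n.+1) (Cantor.to_nat (k, i))) m.+1 =
    mkseq (fun i => f (Cantor.to_nat (k, i))) m.+1.
  move=> <-; apply/eq_in_map => i; rewrite mem_iota add0n ltnS => /andP[_ im].
  by rewrite nth_mkseq // ltnS to_nat_monotone.
apply/seteqP; split=> [x Ex|x [f Ef] k _].
  have /choice[g Eg] : forall k, exists g : nat -> nat, forall m, E k (mkseq g m.+1) x.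
    by move=> k; case: (Ex k I) => g Eg; exists g.
  exists (fun j => g (Cantor.of_nat j).1 (Cantor.of_nat j).2) => n.
  rewrite /cap_index size_mkseq /=.
  case: (Cantor.of_nat n) (Cantor.cancel_to_of n) => k m /= kmn.
  by rewrite nth_branch //; under eq_mkseq do rewrite Cantor.cancel_of_to.
exists (fun i => f (Cantor.to_nat (k, i))) => m.
move: (Ef (Cantor.to_nat (k, m))).
by rewrite /cap_index size_mkseq succnK Cantor.cancel_of_to /= nth_branch.
Qed.

End suslin_operation.

Section measurable_suslin.
Context d (T : measurableType d) (R : realType) (P : probability T R).
Local Open Scope ereal_scope.

Lemma measurable_cover (A : set T) : exists H, [/\ measurable H, A `<=` H &
  forall B, measurable B -> A `<=` B -> P (H `\` B) = 0].
Proof.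
pose m := ereal_inf [set P B | B in [set B | measurable B /\ A `<=` B]].
have m_le B : measurable B -> A `<=` B -> m <= P B.
  by move=> mB AB; apply: ereal_inf_lbound; exists B.
have m_fin : m \is a fin_num.
  rewrite ge0_fin_numE; last by apply: le_ereal_inf_tmp => _ [B _ <-].
  by rewrite (le_lt_trans (m_le _ measurableT (subsetT A))) ?probability_setT ?ltry.
have /choice[G HG] : forall n : nat, exists G, [/\ measurable G, A `<=` G &
    P G < m + (n.+1%:R^-1)%:E].
  move=> n; have n0 : (0 < n.+1%:R^-1 :> R)%R by rewrite invr_gt0.
  by have [_ [G [mG AG] <-] PG] := lb_ereal_inf_adherent n0 m_fin; exists G.
have mG n : measurable (G n) by case: (HG n).
have mH : measurable (\bigcap_n G n) by exact: bigcapT_measurable.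
have AH : A `<=` \bigcap_n G n by move=> x Ax n _; case: (HG n) => _ /(_ x Ax).
have PH_le : P (\bigcap_n G n) <= m.
  apply/lee_addgt0Pr => e e0; have [k ke] := ltr_add_invr e0.
  rewrite add0r in ke; apply: (@le_trans _ _ (P (G k))).
    by apply: le_measure; rewrite ?inE //; exact: bigcap_inf.
  by case: (HG k) => _ _ /ltW/le_trans; apply; rewrite leeD2l // lee_fin ltW.
exists (\bigcap_n G n); split => // B mB AB.
apply/eqP; rewrite -measure_le0 measureD ?(le_lt_trans (probability_le1 _ _)) ?ltry //.
rewrite sube_le0 (le_trans PH_le) // m_le //; first exact: measurableI.
by move=> x Ax; split; [exact: AH|exact: AB].
Qed.

Lemma measurable_cover_sub (D A : set T) : measurable D -> A `<=` D ->
  exists H, [/\ measurable H, A `<=` H, H `<=` D &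
    forall B, measurable B -> A `<=` B -> P (H `\` B) = 0].
Proof.
move=> mD AD; have [H [mH AH HB]] := measurable_cover A.
exists (H `&` D); split => [||x []//|B mB AB]; first exact: measurableI.
  by move=> x Ax; split; [exact: AH|exact: AD].
apply/eqP; rewrite -measure_le0 -(HB B mB AB) le_measure ?inE //.
- by apply: measurableD => //; exact: measurableI.
- exact: measurableD.
- by move=> x [[]].
Qed.

Hypothesis P_complete : measure_is_complete P.

Lemma measurable_suslin (E : seq nat -> set T) :
  (forall s, measurable (E s)) -> measurable (suslin E).
Proof.
move=> mE.
pose S s := [set w | exists f : nat -> nat,
  mkseq f (size s) = s /\ forall n, E (mkseq f n.+1) w].
pose E' (s : seq nat) : set T := if s is [::] then setT else E s.
have mE' s : measurable (E' s) by case: s => [|h t]; rewrite /E'.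
have SE' s : S s `<=` E' s.
  by case: s => [//|h t] w [f [fs /(_ (size t))]]; rewrite /= -fs.
have /choice[H HH] := fun s => measurable_cover_sub (mE' s) (SE' s).
have mH s : measurable (H s) by case: (HH s).
(* Off the null set [Nall], a point of [H s] lies in some [H (rcons s k)], so
   every point of [H [::]] outside [Nall] is reached by a branch. *)
pose N s := H s `\` \bigcup_k H (rcons s k).
have N0 s : P (N s) = 0.
  case: (HH s) => _ _ _; apply; first exact: bigcupT_measurable.
  move=> w [f [fs Ef]]; exists (f (size s)) => //.
  case: (HH (rcons s (f (size s)))) => _ + _ _; apply.
  by exists f; rewrite size_rcons mkseqS fs.
pose Nall := \bigcup_n N (odflt [::] (unpickle n)).
have Nall_neg : P.-negligible Nall.
  apply: negligible_bigcup => n; exists (N (odflt [::] (unpickle n))).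
  by split; [apply: measurableD => //; exact: bigcupT_measurable|exact: N0|].
have suslin_H0 : suslin E `<=` H [::].
  by move=> w [f Ef]; case: (HH [::]) => _ + _ _; apply; exists f.
have H0_suslin : H [::] `\` Nall `<=` suslin E.
  move=> w [H0w Nw]; apply: (suslin_branch (H := H)) => // [[//|h t]|s Hs].
    by move=> _; case: (HH (h :: t)).
  apply: contra_notP Nw => Hstep; exists (pickle s) => //; rewrite pickleK.
  by split => // -[k _ Hk]; apply: Hstep; exists k.
have -> : suslin E = H [::] `\` (H [::] `\` suslin E) by rewrite setDD setIidr.
apply: measurableD => //; apply: P_complete; apply: negligibleS Nall_neg.
by move=> w [H0w nw]; apply: contra_notP nw => Nw; exact: H0_suslin.
Qed.

End measurable_suslin.

Section rect_suslin.
Context {d} {T : measurableType d} {R : realType}.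
Implicit Types (F : set T) (A : set (T * R)).

Definition closed_rect (c : set T * R * R) : set (T * R) :=
  c.1.1 `*` `[c.1.2, c.2].

Definition rect_suslin A := exists C : seq nat -> set T * R * R,
  (forall s, measurable (C s).1.1) /\ A = suslin (closed_rect \o C).

Lemma rect_suslin_rect F a b : measurable F -> rect_suslin (F `*` `[a, b]).
Proof.
move=> mF; exists (fun=> (F, a, b)); split => //.
by apply/seteqP; split => [x Fx|x [f /(_ 0%N)//]]; exists (fun=> 0%N).
Qed.

Lemma rect_suslin_bigcup (A : nat -> set (T * R)) :
  (forall k, rect_suslin (A k)) -> rect_suslin (\bigcup_k A k).
Proof.
move=> /choice[C /all_and2[mC /funext ->]]; rewrite bigcup_suslin.
by exists (fun s => C (cup_index s).1 (cup_index s).2).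
Qed.

Lemma rect_suslin_bigcap (A : nat -> set (T * R)) :
  (forall k, rect_suslin (A k)) -> rect_suslin (\bigcap_k A k).
Proof.
move=> /choice[C /all_and2[mC /funext ->]]; rewrite bigcap_suslin.
by exists (fun s => C (cap_index s).1 (cap_index s).2).
Qed.

Lemma rect_suslin_setX F (G : set R) (a b : nat -> nat -> R) : measurable F ->
  G = \bigcup_n \bigcup_m `[a n m, b n m]%classic -> rect_suslin (F `*` G).
Proof.
move=> mF ->; rewrite setX_bigcupr; apply: rect_suslin_bigcup => n.
by rewrite setX_bigcupr; apply: rect_suslin_bigcup => m; exact: rect_suslin_rect.
Qed.

Lemma rect_suslin_setXT F : measurable F -> rect_suslin (F `*` setT).
Proof.
move=> mF.
apply: (rect_suslin_setX (a := fun n _ => - n%:R) (b := fun _ m => m%:R)) => //.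
apply/seteqP; split => // t _; exists (Num.truncn (- t)).+1 => //.
exists (Num.truncn t).+1 => //=; rewrite in_itv /= lerNl.
by rewrite !ltW ?truncnS_gt.
Qed.

Lemma rect_suslin_setX_itvcy F x : measurable F -> rect_suslin (F `*` `[x, +oo[).
Proof.
move=> mF.
apply: (rect_suslin_setX (a := fun _ _ => x) (b := fun _ m => x + m%:R)) => //.
apply/seteqP; split => [t|t [_ _ [m _]]]; rewrite /= !in_itv /= ?andbT.
  move=> xt; exists 0%N => //; exists (Num.truncn (t - x)).+1 => //=.
  by rewrite in_itv /= xt -lerBlDl ltW ?truncnS_gt.
by case/andP.
Qed.

Lemma rect_suslin_setX_itvNyo F x : measurable F -> rect_suslin (F `*` `]-oo, x[).
Proof.
move=> mF; apply: (rect_suslin_setX (a := fun _ m => x - m%:R)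
                                     (b := fun n _ => x - n.+1%:R^-1)) => //.
apply/seteqP; split => [t|t [n _ [m _]]]; rewrite /= !in_itv /=.
  move=> tx; have [n xn] := ltr_add_invr tx; exists n => //.
  exists (Num.truncn (x - t)).+1 => //=.
  by rewrite in_itv /= lerBlDr -lerBlDl ltW ?truncnS_gt //= lerBrDr ltW.
case/andP => _ /le_lt_trans; apply.
by rewrite gtrDl oppr_lt0 invr_gt0.
Qed.

Definition two_sided_rect_suslin := [set A | rect_suslin A /\ rect_suslin (~` A)].

Lemma sigma_algebra_two_sided_rect_suslin : sigma_algebra setT two_sided_rect_suslin.
Proof.
split.
- split; first by rewrite -(set0X `[0 : R, 0]); exact: rect_suslin_rect.
  by rewrite setC0 -setXTT; exact: rect_suslin_setXT.
- by move=> A [rA rCA]; rewrite setTD; split => //; rewrite setCK.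
- move=> A rA; split; first by apply: rect_suslin_bigcup => n; case: (rA n).
  by rewrite setC_bigcup; apply: rect_suslin_bigcap => n; case: (rA n).
Qed.

Lemma measurable_rect_suslin A : measurable A -> rect_suslin A.
Proof.
move=> mA; suff : two_sided_rect_suslin A by case.
apply: (smallest_sub sigma_algebra_two_sided_rect_suslin _ mA) => _ [[B mB <-]|[G mG <-]].
  rewrite setTI -setXT; split; first exact: rect_suslin_setXT.
  by rewrite setXT preimage_setC -setXT; exact/rect_suslin_setXT/measurableC.
have ER : @measurable _ R = <<s @RGenInftyO.G R >> := RGenInftyO.measurableE R.
rewrite setTI -setTX; rewrite ER in mG; move: G mG; apply: smallest_sub.
- have [r0 rC rU] := sigma_algebra_two_sided_rect_suslin.
  split => [|G rG|G rG] /=; first by rewrite setX0.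
  + by rewrite setTD setTX -preimage_setC -setTX -setTD; exact: rC.
  + by rewrite setX_bigcupr; exact: rU.
- move=> _ [x ->]; split; first exact: rect_suslin_setX_itvNyo.
  by rewrite setTX preimage_setC -setTX setCitvl; exact: rect_suslin_setX_itvcy.
Qed.

End rect_suslin.

Lemma measurable_const_set d (T : measurableType d) (Q : Prop) :
  measurable [set _ : T | Q].
Proof.
have [q|nq] := pselect Q.
  by rewrite (_ : [set _ | Q] = setT) //; apply/seteqP; split.
by rewrite (_ : [set _ | Q] = set0) //; apply/seteqP; split.
Qed.

Lemma take_mkseq (A : Type) (f : nat -> A) k n : (k <= n)%N ->
  take k (mkseq f n) = mkseq f k.
Proof. by move=> kn; rewrite -map_take take_iota (minn_idPl kn). Qed.

Section measurable_projection.
Context d (T : measurableType d) (R : realType).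

(* The intervals along a branch have a common point iff they pairwise meet:
   take the supremum of their left ends. *)
Lemma image_fst_suslin (C : seq nat -> set T * R * R) :
  fst @` suslin (closed_rect \o C) = suslin (fun s => (C s).1.1 `&`
    [set _ | forall k l, (k < size s)%N -> (l < size s)%N ->
       (C (take k.+1 s)).1.2 <= (C (take l.+1 s)).2]).
Proof.
apply/seteqP; split => [_ [[w t] [f Cf] <-]|w [f Ef]].
  exists f => n; split; first by case: (Cf n).
  move=> k l; rewrite size_mkseq ltnS => kn ln; rewrite !take_mkseq //.
  have [_ + ] := Cf k; have [_ + ] := Cf l; rewrite /= !in_itv /=.
  by move=> /andP[_ tb] /andP[ak _]; exact: le_trans tb.
pose a n := (C (mkseq f n.+1)).1.2; pose b n := (C (mkseq f n.+1)).2.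
have ab k l : a k <= b l.
  case: (Ef (maxn k l)) => _ /(_ k l); rewrite size_mkseq !ltnS leq_maxl leq_maxr.
  by rewrite !take_mkseq ?ltnS ?leq_maxl ?leq_maxr //; apply.
have a_sup : has_sup (range a).
  by split; [exists (a 0%N), 0%N|exists (b 0%N) => _ [n _ <-]; exact: ab].
exists (w, sup (range a)) => //; exists f => n; split; first by case: (Ef n).
rewrite /= in_itv /=; apply/andP; split; first by apply: sup_upper_bound => //; exists n.
by apply: ge_sup; [exists (a 0%N), 0%N|move=> _ [k _ <-]; exact: ab].
Qed.

Variable P : probability T R.
Hypothesis P_complete : measure_is_complete P.

Lemma measurable_image_fst (A : set (T * R)) : measurable A -> measurable (fst @` A).
Proof.
move=> /measurable_rect_suslin[C [mC ->]]; rewrite image_fst_suslin.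
apply: (measurable_suslin P_complete) => s.
by apply: measurableI => //; exact: measurable_const_set.
Qed.

End measurable_projection.

Lemma measurable_fun_lt d (T : measurableType d) (R : realType) (D : set T)
    (f g : T -> R) :
  measurable D -> measurable_fun D f -> measurable_fun D g ->
  measurable (D `&` [set x | f x < g x]).
Proof.
move=> mD mf mg; under eq_set => x do rewrite -lte_fin.
by apply: measurable_lte => //; exact: measurableT_comp.
Qed.

Lemma itv_interior_or_bound (R : realType) (I : interval R) s : s \in I ->
  (exists a b : rat, [/\ ratr a \in I, ratr b \in I & ratr a < s < ratr b]) \/
  s = inf [set` I] \/ s = sup [set` I].
Proof.
move=> sI.
have [lb|/existsNP[x /not_implyP[xI /negP]]] := pselect (forall x, x \in I -> s <= x).
  right; left; apply/eqP; rewrite eq_le; apply/andP; split.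
  - by apply: lb_le_inf; [exists s|exact: lb].
  - by apply: ge_inf => //; exists s => y; exact: lb.
rewrite -ltNge => xs.
have [ub|/existsNP[y /not_implyP[yI /negP]]] := pselect (forall y, y \in I -> y <= s).
  right; right; apply/eqP; rewrite eq_le; apply/andP; split.
  - by apply: sup_upper_bound => //; split; [exists s|exists s => y; exact: ub].
  - by apply: ge_sup; [exists s|exact: ub].
rewrite -ltNge => sy; left.
have [a] := rat_in_itvoo xs; rewrite in_itv /= => /andP[xa a_s].
have [b] := rat_in_itvoo sy; rewrite in_itv /= => /andP[sb yb].
have itvI := @interval_is_interval R I.
exists a, b; rewrite a_s sb; split => //.
- by apply: (itvI x s) => //; rewrite (ltW xa) ltW.
- by apply: (itvI s y) => //; rewrite (ltW sb) ltW.
Qed.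

Section until.
Context d (T : measurableType d) (R : realType) (P : probability T R).
Hypothesis P_complete : measure_is_complete P.
Implicit Types (A : set (T * R)) (x y : T * R -> R).

Let measurable_lt x y : measurable_fun setT x -> measurable_fun setT y ->
  measurable [set z | x z < y z].
Proof. by move=> mx my; rewrite -[X in measurable X]setTI; exact: measurable_fun_lt. Qed.

Let measurable_section A x : measurable A -> measurable_fun setT x ->
  measurable [set z | A (z.1, x z)].
Proof.
move=> mA mx; rewrite -[X in measurable X]setTI.
exact: (measurable_fun_pair measurable_fst mx).
Qed.

Let measurable_snd_add c : measurable_fun setT (fun z : T * R => z.2 + c).
Proof. by apply: measurable_funD => //; exact: measurable_cst. Qed.

Lemma measurable_exists_between A x y : measurable A ->
  measurable_fun setT x -> measurable_fun setT y ->
  measurable [set z | exists u, x z < u < y z /\ A (z.1, u)].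
Proof.
move=> mA mx my.
pose slab q1 q2 := fst @` (A `&` (setT `*` `]ratr q1, ratr q2[%classic)).
have -> : [set z | exists u, x z < u < y z /\ A (z.1, u)] =
    \bigcup_(q1 : rat) \bigcup_(q2 : rat) ([set z | x z < ratr q1] `&`
      [set z | ratr q2 < y z] `&` [set z | slab q1 q2 z.1]).
  apply/seteqP; split => [z [u [/andP[xu uy] Au]]|].
    have [q1] := rat_in_itvoo xu; rewrite in_itv /= => /andP[xq1 q1u].
    have [q2] := rat_in_itvoo uy; rewrite in_itv /= => /andP[uq2 q2y].
    exists q1 => //; exists q2 => //; split => //; exists (z.1, u) => //.
    by split => //; split => //=; rewrite in_itv /= q1u uq2.
  move=> z [q1 _ [q2 _ [[xq1 q2y] [[w u] [Au [_]]]]]].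
  rewrite /= in_itv /= => /andP[q1u uq2] wz; exists u; rewrite -wz; split => //.
  by rewrite (lt_trans xq1 q1u) (lt_trans uq2 q2y).
apply: bigcupT_measurable_rat => q1; apply: bigcupT_measurable_rat => q2.
apply: measurableI; first apply: measurableI.
- by apply: measurable_lt => //; exact: measurable_cst.
- by apply: measurable_lt => //; exact: measurable_cst.
rewrite -[X in measurable X]setTI; apply: measurable_fst => //.
apply: (measurable_image_fst P_complete); apply: measurableI => //.
by apply: measurableX => //; exact: measurable_itv.
Qed.

Definition holds_on A (w : T) (a b : R) := forall u, a <= u -> u < b -> A (w, u).

Lemma holds_onW A w a b c : c <= b -> holds_on A w a b -> holds_on A w a c.
Proof. by move=> cb Ab u au uc; apply: Ab au (lt_le_trans uc cb). Qed.

Lemma measurable_holds_on A x y : measurable A ->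
  measurable_fun setT x -> measurable_fun setT y ->
  measurable [set z | holds_on A z.1 (x z) (y z)].
Proof.
move=> mA mx my.
have -> : [set z | holds_on A z.1 (x z) (y z)] =
    ~` ([set z | x z < y z] `&` ~` [set z | A (z.1, x z)] `|`
        [set z | exists u, x z < u < y z /\ (~` A) (z.1, u)]).
  apply/seteqP; split => [z Az [[xy nA]|[u [/andP[xu uy] nA]]]|z nB u xu uy].
  - exact/nA/Az.
  - exact/nA/Az/uy/ltW.
  apply: contrapT => nAu; apply: nB; have [xu'|xu'] := eqVneq (x z) u.
    by left; split; rewrite /= xu'.
  by right; exists u; rewrite uy andbT lt_neqAle xu' xu.
apply: measurableC; apply: measurableU.
  apply: measurableI; first exact: measurable_lt.
  by apply: measurableC; exact: measurable_section.
exact: measurable_exists_between (measurableC mA) _ _.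
Qed.

Definition run_end A (z : T * R) : \bar R :=
  ereal_sup [set c%:E | c in [set c | holds_on A z.1 z.2 c]].

Lemma run_end_gtP A z r :
  (r%:E < run_end A z)%E <-> exists2 c, r < c & holds_on A z.1 z.2 c.
Proof.
split => [/ereal_sup_gt[_ [c Ac <-]]|[c rc Ac]]; first by rewrite lte_fin; exists c.
by apply: (@lt_le_trans _ _ c%:E); [rewrite lte_fin|apply: ereal_sup_ubound; exists c].
Qed.

Lemma le_run_endP A z c : (c%:E <= run_end A z)%E <-> holds_on A z.1 z.2 c.
Proof.
split => [cA u tu uc|Ac]; last by apply: ereal_sup_ubound; exists c.
have /run_end_gtP[c' uc' Ac'] : (u%:E < run_end A z)%E.
  by apply: lt_le_trans cA; rewrite lte_fin.
exact: Ac'.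
Qed.

Lemma measurable_run_end A : measurable A -> measurable_fun setT (run_end A).
Proof.
move=> mA; apply: (measurability _ (ErealGenOInfty.measurableE R)) => //.
move=> _ [_ [r ->] <-]; rewrite setTI.
have -> : run_end A @^-1` `]r%:E, +oo[ = \bigcup_(q : rat)
    ([set _ | r < ratr q] `&` [set z | holds_on A z.1 z.2 (ratr q)]).
  apply/seteqP; split => [z|z [q _ [rq Aq]]]; rewrite /= in_itv /= andbT.
    move=> /run_end_gtP[c rc Ac]; have [q] := rat_in_itvoo rc.
    rewrite in_itv /= => /andP[rq qc].
    by exists q => //; split => //; apply: holds_onW Ac; exact: ltW.
  by apply/run_end_gtP; exists (ratr q).
apply: bigcupT_measurable_rat => q; apply: measurableI; first exact: measurable_const_set.
exact: measurable_holds_on.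
Qed.

Variables (A1 A2 : set (T * R)) (I : interval R).

Definition until := [set z : T * R | exists s,
  s \in I /\ A2 (z.1, z.2 + s) /\ holds_on A1 z.1 z.2 (z.2 + s)].

Definition until_at s := [set z : T * R |
  s \in I /\ A2 (z.1, z.2 + s) /\ holds_on A1 z.1 z.2 (z.2 + s)].

Definition until_run_end := [set z : T * R | run_end A1 z \is a fin_num /\
  fine (run_end A1 z) - z.2 \in I /\ A2 (z.1, fine (run_end A1 z))].

Definition until_between a b := [set z : T * R | a \in I /\ b \in I /\
  holds_on A1 z.1 z.2 (z.2 + b) /\ exists u, z.2 + a < u < z.2 + b /\ A2 (z.1, u)].

(* [inf] and [sup] are junk when [I] has no least or greatest element, which is
   harmless since [until_at s] requires [s \in I]. *)
Lemma untilE : until = until_run_end `|` until_at (inf [set` I]) `|`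
  until_at (sup [set` I]) `|`
  \bigcup_(a : rat) \bigcup_(b : rat) until_between (ratr a) (ratr b).
Proof.
apply/seteqP; split => [[w t] [s [sI [A2s A1s]]]|[w t] /=].
  have := proj2 (le_run_endP _ _ _) A1s; rewrite le_eqVlt => /orP[/eqP tau|].
    by left; left; left; rewrite /until_run_end /= -tau /= addrAC subrr add0r.
  move=> /run_end_gtP[c sc A1c] /=.
  have [[a [b [aI bI /andP[a_s sb]]]]|[s_inf|s_sup]] := itv_interior_or_bound sI.
  - have : s < Num.min (ratr b) (c - t) by rewrite lt_min sb ltrBrDl.
    move=> /rat_in_itvoo[b']; rewrite in_itv /= lt_min => /andP[sb' /andP[b'b b'c]].
    right; exists a => //; exists b' => //; split => //; split.
      by apply: (@interval_is_interval _ I s (ratr b)) => //; rewrite !ltW.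
    split; first by apply: holds_onW A1c; rewrite -lerBrDl ltW.
    by exists (t + s); rewrite !ltrD2l a_s sb'.
  - by left; left; right; rewrite -s_inf.
  - by left; right; rewrite -s_sup.
move=> [[[[tau_fin [tauI A2tau]]|[sI [A2s A1s]]]|[sI [A2s A1s]]]|].
- exists (fine (run_end A1 (w, t)) - t); rewrite addrCA subrr addr0.
  by do 2 split => //; apply/le_run_endP; rewrite fineK.
- by exists (inf [set` I]).
- by exists (sup [set` I]).
- move=> [a _ [b _ [aI [bI [A1b [u [/andP[au ub] A2u]]]]]]].
  exists (u - t); rewrite addrCA subrr addr0; split; last first.
    by split => //; apply: holds_onW A1b; exact: ltW.
  apply: (@interval_is_interval _ I (ratr a) (ratr b)) => //.
  by rewrite lerBrDl lerBlDl !ltW.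
Qed.

Hypotheses (mA1 : measurable A1) (mA2 : measurable A2).

Lemma measurable_until_run_end : measurable until_run_end.
Proof.
have mtau : measurable_fun setT (fine \o run_end A1).
  by apply: measurableT_comp; [exact: fine_measurable|exact: measurable_run_end].
apply: measurableI.
  rewrite -[X in measurable X]setTI.
  exact: emeasurable_fin_num (measurable_run_end mA1).
apply: measurableI; last exact: measurable_section.
rewrite -[X in measurable X]setTI.
exact: (measurable_funB mtau measurable_snd) measurableT _ (measurable_itv I).
Qed.

Lemma measurable_until_at s : measurable (until_at s).
Proof.
apply: measurableI; first exact: measurable_const_set.
apply: measurableI; first exact: measurable_section.
exact: measurable_holds_on.
Qed.

Lemma measurable_until_between a b : measurable (until_between a b).
Proof.
apply: measurableI; first exact: measurable_const_set.
apply: measurableI; first exact: measurable_const_set.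
apply: measurableI; first exact: measurable_holds_on.
exact: measurable_exists_between.
Qed.

Lemma measurable_until : measurable until.
Proof.
rewrite untilE; apply: measurableU; last first.
  by do 2 apply: bigcupT_measurable_rat => ?; exact: measurable_until_between.
apply: measurableU; last exact: measurable_until_at.
by apply: measurableU; [exact: measurable_until_run_end|exact: measurable_until_at].
Qed.

End until.

Theorem lemma4p6 (R : realType) (d : measure_display)
    (Omega : measurableType d) (P : probability Omega R)
    (E : completePseudoMetricType R) (AP : Type)
    (X : R -> Omega -> E) (B : AP -> set E)
    (phi1 phi2 : mtl AP R) (I : interval R) :
  measure_is_complete P ->
  polish E ->
  (forall t : R, 0 <= t ->
     forall A : set E, borel_set A -> measurable (X t @^-1` A)) ->
  (forall a : AP, borel_set (B a)) ->
  mtl_wf phi1 -> mtl_wf phi2 ->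
  (forall s : R, s \in I -> 0 <= s) ->
  measurable (mtl_den X B phi1) ->
  measurable (mtl_den X B phi2) ->
  measurable (mtl_den X B (MUntil I phi1 phi2)).
Proof.
move=> P_complete _ _ _ _ _ I_ge0 m1 m2.
have -> : mtl_den X B (MUntil I phi1 phi2) =
    [set z | 0 <= z.2] `&` until (mtl_den X B phi1) (mtl_den X B phi2) I.
  apply/seteqP; split => -[w t] [/= t0 [s [sI [sat2 sat1]]]]; split => //; exists s.
    split=> //; split; first by split => //=; rewrite addr_ge0 // I_ge0.
    by move=> u tu ut; split; [exact: le_trans tu|exact: sat1].
  by split=> //; split; [case: sat2|move=> u tu ut; case: (sat1 u tu ut)].
apply: measurableI; last exact: (measurable_until P_complete).
rewrite -[X in measurable X]setTI; apply: measurable_fun_le => //; exact: measurable_cst.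
Qed.
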